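(* Let $n\ge 1$ and $m\ge 2$ be integers with $m\nmid n$, let $\ell=\lfloor n/m\rfloor$, and let $f=\theta_{m,0}+\sum_{i=1}^{\ell}a_i\theta_{m,i}$ with $a_i\in\mathbb{F}_2$. Then the compositional inverse of $f$ is $f^{-1}=\theta_{m,0}+\sum_{j=1}^{\ell}b_j\theta_{m,j}$, where $b_1=a_1$ and, for $j\in\{2,3,\dots,\ell\}$, $b_j=a_j+\sum_{u+v=j,\ u,v\in\{1,\dots,j-1\}}a_ub_v$. Furthermore, $f$ is an involution (i.e. $f\circ f$ is the identity) if and only if $a_i=0$ for every $i\in\{1,2,\dots,\lfloor \ell/2\rfloor\}$.
   Context: For $x=(x_0,\dots,x_{n-1})\in\mathbb{F}_2^n$, indices of coordinates are taken modulo $n$. For a nonnegative integer $k$, the map $\theta_{m,k}\colon\mathbb{F}_2^n\to\mathbb{F}_2^n$ is defined by $\theta_{m,k}(x)=y$ with $y_i=x_{i+mk}\prod_{1\le j\le mk-1,\ m\nmid j}(x_{i+j}+1)$ for $i\in\{0,\dots,n-1\}$; $\theta_{m,0}$ is the identity map. Sums of maps are pointwise sums over $\mathbb{F}_2^n$; arithmetic on the coefficients is in $\mathbb{F}_2$. *)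

From HB Require Import structures.
From mathcomp Require Import all_boot all_order all_algebra.
Set Implicit Arguments. Unset Strict Implicit. Unset Printing Implicit Defensive.
Import GRing.Theory.
Local Open Scope ring_scope.

Definition vec (n : nat) := {ffun 'I_n -> 'F_2}.

(* Coordinate x_k with the index k taken modulo n (n >= 1 in all uses). *)
Definition coord (n : nat) (x : vec n) (k : nat) : 'F_2 :=
  odflt 0 (omap x (insub (k %% n)%N : option 'I_n)).

Definition theta (n m k : nat) (x : vec n) : vec n :=
  [ffun i : 'I_n => coord x (i + m * k)%N *
     \prod_(1 <= j < m * k | ~~ (m %| j)%N) (coord x (i + j)%N + 1)].

Definition thsum (n m l : nat) (c : nat -> 'F_2) (x : vec n) : vec n :=
  [ffun t : 'I_n => theta m 0 x t + \sum_(1 <= i < l.+1) c i * theta m i x t].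

(* For a sequence X over F_2, theta_{m,k}(X)_i is nonzero exactly when X_{i+mk} = 1
   and X vanishes at every position i+j with 0 < j < mk and m not dividing j.  From
   this description one checks, on sequences indexed by nat, that
   theta_{m,k} o (sum_j c_j theta_{m,j}) = sum_j c_j theta_{m,k+j} whenever c_0 = 1.
   On F_2^n the map theta_{m,k} vanishes once mk > n: as m does not divide n, the
   index i+mk wraps around onto the off-grid position i+(mk-n).  So composing maps
   theta_{m,0} + sum_{i<=l} c_i theta_{m,i} multiplies their coefficient series
   1 + sum_i c_i t^i modulo t^{l+1}, and since theta_{m,0}, ..., theta_{m,l} are
   linearly independent (evaluate at the unit vectors e_{mk}), a composite is the
   identity iff that product is 1 modulo t^{l+1}.  The recursion for b says
   (1 + A)(1 + B) = 1, and in characteristic 2, (1 + A)^2 = 1 + A(t^2), which gives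
   the involution criterion. *)

From Pilot Require Import Defs.
From mathcomp Require Import all_boot all_order all_algebra zify.
Set Implicit Arguments.
Unset Strict Implicit.
Unset Printing Implicit Defensive.
Import GRing.Theory.
Local Open Scope ring_scope.

Section Convolution.

Variable R : comNzRingType.
Implicit Types c d : nat -> R.

Definition conv c d s := \sum_(0 <= i < s.+1) c i * d (s - i)%N.

(* [c 0] is ignored: it stands for the coefficient 1 of theta_{m,0}. *)
Definition cons1 c i := if i is 0 then 1 else c i.

Lemma cons1E c i : (0 < i)%N -> cons1 c i = c i.
Proof. by case: i. Qed.

Lemma conv_polyE c d N s : (s < N)%N ->
  conv c d s = (\poly_(i < N) c i * \poly_(i < N) d i)`_s.
Proof.
move=> ltsN; rewrite coefM /conv big_mkord; apply: eq_bigr => i _.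
rewrite !coef_poly (leq_ltn_trans (leq_subr _ _) ltsN) (leq_ltn_trans _ ltsN) //.
by rewrite -ltnS.
Qed.

Lemma convC c d s : conv c d s = conv d c s.
Proof. by rewrite (conv_polyE c d (ltnSn s)) (conv_polyE d c (ltnSn s)) mulrC. Qed.

Lemma conv_cons1_0 c d : conv (cons1 c) (cons1 d) 0 = 1.
Proof. by rewrite /conv big_nat1 mul1r. Qed.

Lemma conv_cons1 c d s : (0 < s)%N ->
  conv (cons1 c) (cons1 d) s = c s + d s + \sum_(1 <= i < s) c i * d (s - i)%N.
Proof.
case: s => // s _.
rewrite /conv big_ltn // big_nat_recr //= subn0 subnn mul1r mulr1.
rewrite (addrC _ (c _)) addrA (addrC (d _)); congr (_ + _).
apply: eq_big_nat => i /andP[i_gt0 lti].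
by case: i i_gt0 lti => // i _; rewrite ltnS -subn_gt0 subSS; case: (s - i)%N.
Qed.

Lemma conv_cons1_eq0 c d s : 2 \in [pchar R] -> (0 < s)%N ->
  d s = c s + \sum_(1 <= u < s) c u * d (s - u)%N -> conv (cons1 c) (cons1 d) s = 0.
Proof.
move=> pchar2 s_gt0 d_rec; rewrite conv_cons1 // d_rec addrA.
by rewrite (addrr_pchar2 pchar2) add0r (addrr_pchar2 pchar2).
Qed.

Lemma conv_sqr c s : 2 \in [pchar R] ->
  conv c c s = if odd s then 0 else c s./2 ^+ 2.
Proof.
move=> pchar2; have pchar2X : 2 \in [pchar {poly R}] by rewrite pchar_poly.
rewrite (conv_polyE c c (ltnSn s)) -expr2 -(pFrobenius_autE pchar2X) poly_def.
rewrite rmorph_sum /=.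
under eq_bigr do rewrite pFrobenius_autE exprZn -exprM.
rewrite coef_sumMXn; case: ifP => [odd_s | even_s].
  rewrite big_pred0 // => i /=; apply/negP => /eqP i2.
  by move: odd_s; rewrite -i2 oddM andbF.
have half_s : forall i, (i * 2 == s)%N = (i == s./2).
  by move=> i; rewrite -{1}(odd_double_half s) even_s -muln2 eqn_pmul2r.
rewrite (eq_bigl (fun i : 'I_s.+1 => val i == s./2)) => [|i]; last by rewrite half_s.
by rewrite (big_ord1_eq _ (fun k => c k ^+ 2)) ltnS -divn2 leq_div.
Qed.

Lemma sum_shift_trunc L d F i : (forall s, (L < s)%N -> F s = 0) ->
  \sum_(0 <= j < L.+1) d j * F (i + j)%N =
  \sum_(0 <= s < L.+1) (if (i <= s)%N then d (s - i)%N * F s else 0).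
Proof.
move=> F_trunc; have [leiL | ltLi] := leqP i L; last first.
  rewrite !big1_seq // => j /andP[_]; rewrite mem_index_iota => /andP[_ ltj].
    by rewrite leqNgt (leq_trans ltj).
  by rewrite F_trunc ?mulr0 //; apply: leq_trans ltLi _; rewrite leq_addr.
rewrite (@big_cat_nat _ _ _ (L.+1 - i) 0 L.+1) ?leq_subr //=.
rewrite [X in _ + X]big1_seq; last first.
  move=> j /andP[_]; rewrite mem_index_iota => /andP[lej _].
  by rewrite F_trunc ?mulr0 //; lia.
rewrite (@big_cat_nat _ _ _ i 0 L.+1) ?(leq_trans leiL) //=.
rewrite [X in _ = X + _]big1_seq; last first.
  by move=> s /andP[_]; rewrite mem_index_iota => /andP[_ lts]; rewrite leqNgt lts.
rewrite addr0 add0r -{3}(add0n i) big_addn; apply: eq_bigr => j _.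
by rewrite leq_addl addnK addnC.
Qed.

Lemma sum_conv_trunc L c d F : (forall s, (L < s)%N -> F s = 0) ->
  \sum_(0 <= i < L.+1) c i * \sum_(0 <= j < L.+1) d j * F (i + j)%N =
  \sum_(0 <= s < L.+1) conv c d s * F s.
Proof.
move=> F_trunc; under eq_bigr do rewrite sum_shift_trunc // mulr_sumr.
rewrite exchange_big /=; apply: eq_big_nat => s /andP[_ ltsL].
rewrite /conv mulr_suml (@big_nat_widen _ _ _ 0 s.+1 L.+1) // [in RHS]big_mkcond.
by apply: eq_bigr => i _; rewrite ltnS; case: ifP; rewrite ?mulr0 ?mulrA.
Qed.

End Convolution.

Lemma conv_cons1_sqr_eq0 (R : idomainType) L (a : nat -> R) : 2 \in [pchar R] ->
  (forall s, (1 <= s <= L)%N -> conv (cons1 a) (cons1 a) s = 0) <->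
  (forall i, (1 <= i <= L./2)%N -> a i = 0).
Proof.
move=> pchar2; split=> [conv_aa i /andP[i_gt0 le_i_half] | a0 s /andP[s_gt0 leL]].
  have range2 : (0 < i.*2 <= L)%N by rewrite -divn2 -muln2 in le_i_half *; lia.
  move: (conv_aa _ range2); rewrite conv_sqr // odd_double doubleK /= cons1E //.
  by move=> /eqP; rewrite sqrf_eq0 => /eqP.
rewrite conv_sqr //; case: ifP => // s_even.
have s_half : s./2.*2 = s by rewrite -[RHS]odd_double_half s_even.
rewrite -divn2 -muln2 in s_half.
by rewrite cons1E ?a0 ?expr0n // -!divn2; lia.
Qed.

Lemma F2_cases (x : 'F_2) : x = 0 \/ x = 1.
Proof. by case: x => [[|[|//]] ?]; [left | right]; apply/val_inj. Qed.

Lemma F2_addr1_neq0 (x : 'F_2) : (x + 1 != 0) = (x == 0).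
Proof. by case: (F2_cases x) => ->. Qed.

Lemma F2_neq0_inj (x y : 'F_2) : (x != 0) = (y != 0) -> x = y.
Proof. by case: (F2_cases x) => ->; case: (F2_cases y) => ->. Qed.

Lemma sum_mul_neq0 (R : pzSemiRingType) (I : eqType) (r : seq I) (e F : I -> R) :
  \sum_(i <- r) e i * F i != 0 -> exists i, F i != 0.
Proof.
have [/hasP [i _ Fi] _ | /hasPn F0] := boolP (has (fun i => F i != 0) r).
  by exists i.
by rewrite big1_seq ?eqxx // => i /andP[_ /F0 /negPn /eqP ->]; rewrite mulr0.
Qed.

Section SequenceTheta.

Variable m : nat.
Implicit Types (X : nat -> 'F_2) (c : nat -> 'F_2).

Definition stheta k X i :=
  X (i + m * k)%N * \prod_(1 <= j < m * k | ~~ (m %| j)%N) (X (i + j)%N + 1).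

Definition sthsum L c X i := \sum_(0 <= j < L.+1) cons1 c j * stheta j X i.

Lemma sthetaP k X i :
  reflect (X (i + m * k)%N != 0 /\
           forall j, (j < m * k)%N -> ~~ (m %| j)%N -> X (i + j)%N = 0)
          (stheta k X i != 0).
Proof.
rewrite /stheta mulf_eq0 negb_or prodf_seq_neq0.
apply: (iffP andP) => -[Xk clear]; split=> //.
  move=> [|j] ltj j_off; first by rewrite dvdn0 in j_off.
  have /allP/(_ j.+1) := clear; rewrite mem_index_iota ltj j_off F2_addr1_neq0.
  by move=> /(_ isT) /eqP.
apply/allP => j; rewrite mem_index_iota => /andP[_ ltj]; apply/implyP => j_off.
by rewrite clear // addr0 oner_neq0.
Qed.

Lemma stheta0 X i : stheta 0 X i = X i.
Proof. by rewrite /stheta muln0 addn0 big_geq ?mulr1. Qed.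

Lemma stheta_addn k X i t : stheta k X (i + t) = stheta k (fun s => X (i + s)%N) t.
Proof.
by rewrite /stheta addnA; congr (_ * _); apply: eq_bigr => j _; rewrite addnA.
Qed.

Lemma sthsum_addn L c X i t :
  sthsum L c X (i + t) = sthsum L c (fun s => X (i + s)%N) t.
Proof. by apply: eq_bigr => j _; rewrite stheta_addn. Qed.

Lemma eq_stheta k X Y i : X =1 Y -> stheta k X i = stheta k Y i.
Proof.
by move=> eqXY; rewrite /stheta eqXY; congr (_ * _); apply: eq_bigr => j _; rewrite eqXY.
Qed.

Hypothesis m_gt0 : (0 < m)%N.

Lemma sthsum_blocked L c X t p : ~~ (m %| t)%N -> (m %| p)%N -> (t < p)%N ->
  X p != 0 -> (forall s, (t < s < p)%N -> ~~ (m %| s)%N -> X s = 0) ->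
  sthsum L c X t = X t.
Proof.
move=> t_off p_on ltp Xp clearX.
rewrite /sthsum big_ltn // stheta0 mul1r big1_seq ?addr0 // => j /andP[_].
rewrite mem_index_iota => /andP[j_gt0 _].
suff -> : stheta j X t = 0 by rewrite mulr0.
apply/eqP/negPn/negP => /sthetaP [Xq clearq].
have mj_gt0 : (0 < m * j)%N by rewrite muln_gt0 m_gt0.
have q_off : ~~ (m %| t + m * j)%N by rewrite dvdn_addl ?dvdn_mulr.
case: (ltngtP (t + m * j) p) => [ltqp | ltpq | eqqp].
- by rewrite clearX ?eqxx ?q_off // in Xq; apply/andP; split; lia.
- move: Xp; rewrite -(subnKC (ltnW ltp)) clearq ?eqxx //; first lia.
  by rewrite dvdn_subr ?(ltnW ltp).
- by rewrite eqqp p_on in q_off.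
Qed.

Lemma stheta_after_clear k j X :
  (forall t, (t < m * k)%N -> ~~ (m %| t)%N -> X t = 0) ->
  stheta j X (m * k) = stheta (k + j) X 0.
Proof.
move=> clearX; apply: F2_neq0_inj; apply/sthetaP/sthetaP.
  move=> [Xq clearq]; rewrite add0n mulnDr; split=> // t ltt t_off.
  have [ltk | lekt] := ltnP t (m * k); first exact: clearX.
  rewrite add0n -(subnKC lekt) clearq //; first lia.
  by rewrite dvdn_subl ?dvdn_mulr.
rewrite add0n mulnDr => -[Xq clearq]; split=> // t ltt t_off.
by rewrite clearq //; [lia | rewrite dvdn_addr ?dvdn_mulr].
Qed.

Section ThetaOfSum.

Variables (L k : nat) (c X : nat -> 'F_2).

Let Y := sthsum L c X.
Let R := \sum_(0 <= j < L.+1) cons1 c j * stheta (k + j) X 0.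

Lemma stheta_sthsum_clear :
  (forall t, (t < m * k)%N -> ~~ (m %| t)%N -> X t = 0) -> stheta k Y 0 = R.
Proof.
move=> clearX.
have YE : Y (m * k) = R by apply: eq_bigr => j _; rewrite stheta_after_clear.
have clearY : R != 0 -> forall t, (t < m * k)%N -> ~~ (m %| t)%N -> Y t = 0.
  move=> /sum_mul_neq0 [j /sthetaP []]; rewrite add0n => Xv clearv t ltt t_off.
  rewrite /Y (sthsum_blocked _ _ t_off _ _ Xv) ?clearX ?dvdn_mulr //; first lia.
  by move=> s /andP[_ lts] s_off; rewrite -(add0n s) clearv.
apply: F2_neq0_inj; apply/sthetaP/idP => [[] | R_neq0]; first by rewrite add0n YE.
by split=> [|t ltt t_off]; rewrite add0n ?YE ?clearY.
Qed.

(* The last off-grid nonzero entry g of X below mk survives in Y: the first on-grid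
   nonzero entry after g blocks every term theta_{m,j}(X)_g with j > 0. *)
Lemma stheta_sthsum_unclear f : (f < m * k)%N -> ~~ (m %| f)%N -> X f != 0 ->
  stheta k Y 0 = R.
Proof.
move=> ltf f_off Xf.
have -> : R = 0.
  rewrite /R big1_seq // => j _.
  suff -> : stheta (k + j) X 0 = 0 by rewrite mulr0.
  apply/eqP/negPn/negP => /sthetaP [_ clearv].
  by move: Xf; rewrite -(add0n f) clearv ?eqxx //; lia.
apply/eqP/negPn/negP => /sthetaP []; rewrite add0n => /sum_mul_neq0 [j].
move=> /sthetaP [Xp clearp] clearY.
pose P g := [&& (g < m * k)%N, ~~ (m %| g)%N & X g != 0].
have exP : exists g, P g by exists f; rewrite /P ltf f_off Xf.
have ubP g : P g -> (g <= m * k)%N by case/andP => /ltnW.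
case: (ex_maxnP exP ubP) => g /and3P[ltg g_off Xg] maxg.
have YgE : Y g = X g.
  apply: (@sthsum_blocked _ _ _ _ (m * k + m * j)) => //; [|lia|].
    by rewrite dvdn_add ?dvdn_mulr.
  move=> s /andP[ltgs ltsp] s_off; have [ltsk | leks] := ltnP s (m * k).
    apply/eqP/negPn/negP => Xs; have := maxg s; rewrite /P ltsk s_off Xs.
    by move=> /(_ isT); lia.
  rewrite -(subnKC leks) clearp //; first lia.
  by rewrite dvdn_subl ?dvdn_mulr.
by move: Xg; rewrite -YgE -(add0n g) clearY ?eqxx.
Qed.

End ThetaOfSum.

Lemma stheta_sthsum L k c X i :
  stheta k (sthsum L c X) i = \sum_(0 <= j < L.+1) cons1 c j * stheta (k + j) X i.
Proof.
have shift k' Z : stheta k' Z i = stheta k' (fun s => Z (i + s)%N) 0.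
  by rewrite -stheta_addn addn0.
rewrite shift (eq_stheta _ _ (sthsum_addn L c X i)).
under [RHS]eq_bigr do rewrite shift.
set Xi := fun s => X (i + s)%N.
have [/existsP [f /andP[f_off Xf]] | /existsPn clearX] :=
  boolP [exists f : 'I_(m * k), ~~ (m %| f)%N && (Xi f != 0)].
  exact: (stheta_sthsum_unclear L c (ltn_ord f) f_off Xf).
apply: stheta_sthsum_clear => t ltt t_off.
by apply/eqP; move: (clearX (Ordinal ltt)); rewrite /= t_off negbK.
Qed.

End SequenceTheta.

Section Vectors.

Variables (n m : nat).
Hypotheses (n_gt0 : (0 < n)%N) (m_gt0 : (0 < m)%N) (m_ndvd_n : ~~ (m %| n)%N).
Implicit Types (x : vec n) (c d : nat -> 'F_2).

Lemma coord_modn x s : Defs.coord x (s %% n) = Defs.coord x s.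
Proof. by rewrite /Defs.coord modn_mod. Qed.

Lemma coordE x s : Defs.coord x s = x (Ordinal (ltn_pmod s n_gt0)).
Proof.
by rewrite /Defs.coord insubT ?ltn_pmod //= => lt_sn; congr (x _); apply: val_inj.
Qed.

Lemma coord_ord x (i : 'I_n) : Defs.coord x i = x i.
Proof. by rewrite coordE; congr (x _); apply: val_inj; rewrite /= modn_small. Qed.

Lemma thsumE L c x i : thsum m L c x i = sthsum m L c (Defs.coord x) i.
Proof.
rewrite ffunE /sthsum [RHS]big_ltn //= mul1r ffunE; congr (_ + _).
by apply: eq_big_nat => -[|j] //= _; rewrite ffunE.
Qed.

Lemma stheta_coord_modn k x s :
  stheta m k (Defs.coord x) (s %% n) = stheta m k (Defs.coord x) s.
Proof.
have coord_modnD j : Defs.coord x (s %% n + j) = Defs.coord x (s + j).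
  by rewrite -coord_modn modnDml coord_modn.
by rewrite /stheta coord_modnD; congr (_ * _); apply: eq_bigr => j _; rewrite coord_modnD.
Qed.

Lemma coord_thsum L c x : Defs.coord (thsum m L c x) =1 sthsum m L c (Defs.coord x).
Proof.
move=> s; rewrite coordE thsumE; apply: eq_bigr => j _.
by rewrite stheta_coord_modn.
Qed.

Lemma stheta_coord_eq0 k x i : (n < m * k)%N -> stheta m k (Defs.coord x) i = 0.
Proof.
move=> lt_n_mk; apply/eqP/negPn/negP => /sthetaP [Xmk clear].
have lt_wrap : (m * k - n < m * k)%N by lia.
have wrap_off : ~~ (m %| m * k - n)%N by rewrite dvdn_subr ?dvdn_mulr 1?ltnW.
move: Xmk; rewrite -(subnK (ltnW lt_n_mk)) addnA -coord_modn modnDr coord_modn.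
by rewrite clear ?eqxx.
Qed.

Lemma thsum_comp L c d x i : (n < m * L.+1)%N ->
  thsum m L c (thsum m L d x) i =
  \sum_(0 <= s < L.+1) conv (cons1 c) (cons1 d) s * stheta m s (Defs.coord x) i.
Proof.
move=> lt_n_mL; rewrite thsumE /sthsum.
under eq_bigr do rewrite (eq_stheta _ _ _ (coord_thsum L d x)) (stheta_sthsum m_gt0).
apply: sum_conv_trunc => s lt_Ls; apply: stheta_coord_eq0.
by apply: (leq_trans lt_n_mL); rewrite leq_pmul2l.
Qed.

Lemma stheta_indicator k s : (m * k < n)%N -> (m * s < n)%N ->
  stheta m s (Defs.coord [ffun t : 'I_n => ((val t == m * k)%N)%:R]) 0 = (s == k)%:R.
Proof.
move=> ltk lts; set e := [ffun t => _].
have eE j : (j < n)%N -> Defs.coord e j = ((j == m * k)%N)%:R.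
  by move=> ltj; rewrite coordE ffunE /= modn_small.
case: eqP => [-> | ne_sk] /=.
  apply: F2_neq0_inj; rewrite oner_neq0; apply/sthetaP; split.
    by rewrite add0n eE // eqxx oner_neq0.
  move=> j ltj j_off; rewrite add0n eE ?(ltn_trans ltj) //.
  by case: eqP j_off => // ->; rewrite dvdn_mulr.
apply/eqP/negPn/negP => /sthetaP [].
rewrite add0n eE // eqn_pmul2l //.
by move/eqP: ne_sk => /negbTE ->; rewrite eqxx.
Qed.

Lemma thsum_comp_idP c d :
  (forall x, thsum m (n %/ m) c (thsum m (n %/ m) d x) = x) <->
  (forall s, (1 <= s <= n %/ m)%N -> conv (cons1 c) (cons1 d) s = 0).
Proof.
have lt_n_mL : (n < m * (n %/ m).+1)%N by lia.
have lt_mL_n : (m * (n %/ m) < n)%N by lia.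
split=> [comp_id s /andP[s_gt0 leL] | conv0 x].
  have lt_ms_n : (m * s < n)%N by apply: leq_ltn_trans lt_mL_n; rewrite leq_pmul2l.
  pose e : vec n := [ffun t => ((val t == m * s)%N)%:R].
  have := congr1 (fun y : vec n => y (Ordinal n_gt0)) (comp_id e).
  rewrite /= thsum_comp // ffunE /= eq_sym muln_eq0.
  rewrite (negbTE (lt0n_neq0 m_gt0)) (negbTE (lt0n_neq0 s_gt0)) /=.
  under eq_big_nat => s' /andP[_ lts'].
    rewrite stheta_indicator //; last by apply: leq_ltn_trans lt_mL_n; rewrite leq_pmul2l.
    rewrite mulr_natr mulrb.
  over.
  by rewrite -big_mkcond big_nat1_eq ltnS leL.
apply/ffunP => t; rewrite thsum_comp // big_ltn // conv_cons1_0 mul1r stheta0 coord_ord.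
rewrite big1_seq ?addr0 // => s /andP[_]; rewrite mem_index_iota => /andP[s_gt0 ltsL].
by rewrite conv0 ?mul0r // s_gt0 -ltnS.
Qed.

End Vectors.

Theorem proposition1 (n m : nat) (a b : nat -> 'F_2) :
  (1 <= n)%N -> (2 <= m)%N -> ~~ (m %| n)%N ->
  b 1%N = a 1%N ->
  (forall j : nat, (2 <= j <= n %/ m)%N ->
     b j = a j + \sum_(1 <= u < j) a u * b (j - u)%N) ->
  ((forall x : vec n, thsum m (n %/ m) a (thsum m (n %/ m) b x) = x) /\
   (forall x : vec n, thsum m (n %/ m) b (thsum m (n %/ m) a x) = x)) /\
  ((forall x : vec n, thsum m (n %/ m) a (thsum m (n %/ m) a x) = x) <->
   (forall i : nat, (1 <= i <= (n %/ m)./2)%N -> a i = 0)).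
Proof.
move=> n_gt0 m_gt1 m_ndvd_n b1 b_rec.
have m_gt0 : (0 < m)%N by apply: ltnW.
have pchar2 : 2 \in [pchar 'F_2] := pchar_Fp (isT : prime 2).
have conv_ab s : (1 <= s <= n %/ m)%N -> conv (cons1 a) (cons1 b) s = 0.
  case/andP; rewrite leq_eqVlt => /orP[/eqP <- _ | s_gt1 leL].
    by apply: conv_cons1_eq0; rewrite ?big_geq ?addr0.
  by apply: conv_cons1_eq0 (ltnW s_gt1) _ => //; apply: b_rec; rewrite s_gt1.
have comp_idP := thsum_comp_idP n_gt0 m_gt0 m_ndvd_n.
split; last by rewrite -conv_cons1_sqr_eq0 //; apply: comp_idP.
split; apply/comp_idP => s s_range; first exact: conv_ab.
by rewrite convC conv_ab.
Qed.
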